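(* Let $P$ be a weakly ranked poset, $\kappa\in\mathscr{I}(P)$ a $P$-kernel, and $Z=g\kappa f$ its $Z$-function, where $f,g$ are its right and left KLS-functions. Let $P^*$ be the opposite weakly ranked poset. Then $\kappa^*$ is a $P^*$-kernel and $Z^*\in\mathscr{I}(P^* )$ is the $Z$-function associated with $\kappa^*$.
   Context: A weakly ranked poset is a locally finite poset $P$ (all intervals finite) with a weak rank function: integers $r_{xy}$ for $x\le y$ with $r_{xy}>0$ for $x<y$ and $r_{xy}+r_{yz}=r_{xz}$. $I(P)=\prod_{x\le y}\mathbb{Z}[t]$ with components $f_{xy}(t)$ is a ring under convolution $(fg)_{xz}=\sum_{x\le y\le z}f_{xy}g_{yz}$ with identity $\delta$. $\mathscr{I}(P)$ is the subring of $f$ with $\deg f_{xy}\le r_{xy}$; involution $\bar f_{xy}(t)=t^{r_{xy}}f_{xy}(t^{-1})$. $\mathscr{I}_{1/2}(P)$: $f\in\mathscr{I}(P)$ with $f_{xx}=1$ and $\deg f_{xy}<r_{xy}/2$ for $x<y$. A $P$-kernel is $\kappa\in\mathscr{I}(P)$ with $\kappa_{xx}=1$ for all $x$ and $\kappa^{-1}=\bar\kappa$. For a $P$-kernel $\kappa$ there are unique $f,g\in\mathscr{I}_{1/2}(P)$ with $\bar f=\kappa f$, $\bar g=g\kappa$ (right and left KLS-functions); the $Z$-function is $Z:=g\kappa f$. The opposite $P^*$ has $y\le x$ in $P^*$ iff $x\le y$ in $P$, with $r^*_{yx}=r_{xy}$; for $f\in\mathscr{I}(P)$, $f^*\in\mathscr{I}(P^*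 )$ is defined by $f^*_{yx}:=f_{xy}$. *)

From HB Require Import structures.
From mathcomp Require Import all_boot all_order all_algebra.
Set Implicit Arguments. Unset Strict Implicit. Unset Printing Implicit Defensive.
Import Order.TTheory GRing.Theory Num.Theory.
Local Open Scope ring_scope.

(* A weakly ranked poset.  Local finiteness is witnessed by an explicit
   duplicate-free enumeration [itv x y] of every interval [x,y]. The weak rank
   [rk x y] is only meaningful for x <= y. *)
Record wrposet := WRPoset {
  elt : eqType;
  le : elt -> elt -> bool;
  le_refl : forall x, le x x;
  le_anti : forall x y, le x y -> le y x -> x = y;
  le_trans : forall x y z, le x y -> le y z -> le x z;
  itv : elt -> elt -> seq elt;
  itv_uniq : forall x y, uniq (itv x y);
  mem_itv : forall x y z, (z \in itv x y) = le x z && le z y;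
  rk : elt -> elt -> int;
  rk_pos : forall x y, le x y -> x != y -> 0 < rk x y;
  rk_add : forall x y z, le x y -> le y z -> rk x y + rk y z = rk x z
}.
Arguments le : clear implicits.
Arguments itv : clear implicits.
Arguments rk : clear implicits.

Definition opp (P : wrposet) : wrposet.
Proof.
refine (@WRPoset (elt P) (fun x y => le P y x) (fun x => @le_refl P x)
  (fun x y h1 h2 => @le_anti P x y h2 h1) (fun x y z h1 h2 => @le_trans P z y x h2 h1)
  (fun x y => itv P y x) (fun x y => @itv_uniq P y x) _
  (fun x y => rk P y x) _ _).
- by move=> x y z; rewrite mem_itv andbC.
- by move=> x y h hne; apply: rk_pos => //; rewrite eq_sym.
- by move=> x y z h1 h2; rewrite addrC; apply: rk_add.
Defined.

(* Elements of I(P): families f_{xy}(t) in Z[t]; only x <= y matters. *)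
Definition inc (P : wrposet) := elt P -> elt P -> {poly int}.

Definition eqI (P : wrposet) (f g : inc P) :=
  forall x y, le P x y -> f x y = g x y.

Definition conv (P : wrposet) (f g : inc P) : inc P :=
  fun x z => \sum_(y <- itv P x z) f x y * g y z.

Definition delta (P : wrposet) : inc P :=
  fun x y => if x == y then 1 else 0.
Arguments delta : clear implicits.

Definition inI (P : wrposet) (f : inc P) :=
  forall x y, le P x y -> (size (f x y))%:Z - 1 <= rk P x y.

(* involution: bar f_xy(t) = t^{r_xy} f_xy(t^{-1}) (for deg f_xy <= r_xy) *)
Definition bar (P : wrposet) (f : inc P) : inc P :=
  fun x y => let n := `|rk P x y|%N in \poly_(i < n.+1) (f x y)`_(n - i).

Definition inIhalf (P : wrposet) (f : inc P) :=
  [/\ inI f, (forall x, f x x = 1) &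
      (forall x y, le P x y -> x != y -> 2 * ((size (f x y))%:Z - 1) < rk P x y)].

Definition kernel (P : wrposet) (kappa : inc P) :=
  [/\ inI kappa, (forall x, kappa x x = 1),
      eqI (conv kappa (bar kappa)) (delta P) &
      eqI (conv (bar kappa) kappa) (delta P)].

Definition rightKLS (P : wrposet) (kappa f : inc P) :=
  inIhalf f /\ eqI (bar f) (conv kappa f).
Definition leftKLS (P : wrposet) (kappa g : inc P) :=
  inIhalf g /\ eqI (bar g) (conv g kappa).

Definition Zof (P : wrposet) (kappa f g : inc P) : inc P :=
  conv (conv g kappa) f.

(* Z is THE Z-function of kappa: Z in I(P), it equals g kappa f for some
   right/left KLS-functions f, g of kappa, and for any such pair. *)
Definition is_Zfunction (P : wrposet) (kappa Z : inc P) :=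
  [/\ inI Z,
      (exists f g, [/\ rightKLS kappa f, leftKLS kappa g & eqI Z (Zof kappa f g)]) &
      (forall f g, rightKLS kappa f -> leftKLS kappa g -> eqI Z (Zof kappa f g))].

Definition star (P : wrposet) (f : inc P) : inc (opp P) := fun y x => f x y.

From Pilot Require Import Defs.
From mathcomp Require Import all_boot all_order all_algebra.
From mathcomp Require Import zify.
Set Implicit Arguments. Unset Strict Implicit. Unset Printing Implicit Defensive.
Import Order.TTheory GRing.Theory Num.Theory.
Local Open Scope ring_scope.

(* Since Z[t] is commutative, passing to the opposite poset reverses products:
   (a b)^* = b^* a^*, and bar commutes with ^*.  Hence kappa^* is a kernel, a
   left KLS-function g of kappa gives the right KLS-function g^* of kappa^*
   and a right one f gives the left one f^*, and by associativity
   (g kappa f)^* = f^* kappa^* g^*.  This is THE Z-function of kappa^* because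
   KLS-functions are unique: in [bar f - f = sum_{x<z<=y} kappa_xz f_zy] the
   left side determines f_xy, its two terms having disjoint degree ranges. *)

Lemma eq_of_reflect_sub (R : nzRingType) (n : nat) (p q : {poly R}) :
  (2 * size p <= n.+1)%N -> (2 * size q <= n.+1)%N ->
  \poly_(i < n.+1) p`_(n - i) - p = \poly_(i < n.+1) q`_(n - i) - q -> p = q.
Proof.
move=> hp hq /polyP E; apply/polyP => j; move: (E j); rewrite !coefB !coef_poly.
case: (ltnP j (maxn (size p) (size q))) => hj; last first.
  rewrite geq_max in hj; case/andP: hj => hjp hjq.
  by rewrite !(nth_default 0 hjp) !(nth_default 0 hjq).
(* [set] merges the differently elaborated occurrences of [size p] into one
   atom for [lia]. *)
move: hp hq hj; set sp := size p; set sq := size q => hp hq hj.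
have hjn : (j < n.+1)%N by lia.
have hpj : (sp <= n - j)%N by lia.
have hqj : (sq <= n - j)%N by lia.
by rewrite hjn (nth_default 0 hpj) (nth_default 0 hqj) !sub0r => /oppr_inj.
Qed.

Section IncidenceAlgebra.

Variable P : wrposet.
Implicit Types (x y z w : elt P) (a b c f : inc P).

Lemma rk_refl x : rk P x x = 0.
Proof.
by apply: (@addrI _ (rk P x x)); rewrite addr0 (rk_add (Defs.le_refl x) (Defs.le_refl x)).
Qed.

Lemma rk_ge0 x y : le P x y -> 0 <= rk P x y.
Proof.
move=> hxy; case: (eqVneq x y) => [<-|ne]; first by rewrite rk_refl.
exact/ltW/rk_pos.
Qed.

Lemma abs_rk_add x y z : le P x y -> le P y z ->
  `|rk P x z|%N = (`|rk P x y| + `|rk P y z|)%N.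
Proof.
move=> hxy hyz; rewrite -(rk_add hxy hyz).
by move: (rk_ge0 hxy) (rk_ge0 hyz); lia.
Qed.

Lemma inIP f :
  inI f <-> forall x y, le P x y -> (size (f x y) <= `|rk P x y|.+1)%N.
Proof.
split=> hf x y hxy; move: (hf x y hxy) (rk_ge0 hxy); lia.
Qed.

Lemma size_itv_lt x y z : le P x z -> x != z -> le P z y ->
  (size (itv P z y) < size (itv P x y))%N.
Proof.
move=> hxz nxz hzy.
have hsub : {subset x :: itv P z y <= itv P x y}.
  move=> w; rewrite inE => /orP[/eqP->|]; rewrite !mem_itv.
    by rewrite Defs.le_refl (Defs.le_trans hxz hzy).
  by move=> /andP[hzw ->]; rewrite (Defs.le_trans hxz hzw).
apply: uniq_leq_size hsub; rewrite /= itv_uniq andbT mem_itv.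
by apply: contra nxz => /andP[hzx _]; rewrite (Defs.le_anti hxz hzx).
Qed.

Lemma itv_ind (Q : elt P -> elt P -> Prop) :
  (forall x y, le P x y ->
     (forall z, le P x z -> x != z -> le P z y -> Q z y) -> Q x y) ->
  forall x y, le P x y -> Q x y.
Proof.
move=> step x y; have [n] := ubnP (size (itv P x y)).
elim: n x => // n IH x hs hxy; apply: step => // z hxz nxz hzy.
by apply: IH => //; move: (size_itv_lt hxz nxz hzy) hs; lia.
Qed.

Lemma big_itv_widen_r (R : nmodType) x y w (F : elt P -> R) : le P y w ->
  \sum_(z <- itv P x y) F z = \sum_(z <- itv P x w | le P z y) F z.
Proof.
move=> hyw; rewrite -[RHS]big_filter; apply: perm_big; apply: uniq_perm.
- exact: itv_uniq.
- by rewrite filter_uniq ?itv_uniq.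
move=> z; rewrite mem_filter !mem_itv.
by case hzy: (le P z y); rewrite ?andbF //= (Defs.le_trans hzy hyw) andbT.
Qed.

Lemma big_itv_widen_l (R : nmodType) x z w (F : elt P -> R) : le P x z ->
  \sum_(y <- itv P z w) F y = \sum_(y <- itv P x w | le P z y) F y.
Proof.
move=> hxz; rewrite -[RHS]big_filter; apply: perm_big; apply: uniq_perm.
- exact: itv_uniq.
- by rewrite filter_uniq ?itv_uniq.
move=> y; rewrite mem_filter !mem_itv.
by case hzy: (le P z y); rewrite ?andbF //= (Defs.le_trans hxz hzy).
Qed.

Lemma exchange_big_itv (R : nmodType) x w (F : elt P -> elt P -> R) :
  \sum_(y <- itv P x w) \sum_(z <- itv P x y) F y z
  = \sum_(z <- itv P x w) \sum_(y <- itv P z w) F y z.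
Proof.
transitivity (\sum_(y <- itv P x w) \sum_(z <- itv P x w | le P z y) F y z).
  rewrite big_seq [RHS]big_seq; apply: eq_bigr => y.
  by rewrite mem_itv => /andP[_ hyw]; apply: big_itv_widen_r.
transitivity (\sum_(z <- itv P x w) \sum_(y <- itv P x w | le P z y) F y z).
  under eq_bigr do rewrite big_mkcond; rewrite exchange_big.
  by apply: eq_bigr => z _; rewrite [RHS]big_mkcond.
rewrite big_seq [RHS]big_seq; apply: eq_bigr => z.
by rewrite mem_itv => /andP[hxz _]; rewrite (big_itv_widen_l _ _ hxz).
Qed.

Lemma conv_assoc a b c x w :
  conv (conv a b) c x w = conv a (conv b c) x w.
Proof.
rewrite /conv.
transitivity (\sum_(y <- itv P x w) \sum_(z <- itv P x y) a x z * b z y * c y w).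
  by apply: eq_bigr => y _; rewrite big_distrl.
rewrite exchange_big_itv; apply: eq_bigr => z _; rewrite big_distrr /=.
by apply: eq_bigr => y _; rewrite mulrA.
Qed.

Lemma conv_eqI a a' b b' : eqI a a' -> eqI b b' -> eqI (conv a b) (conv a' b').
Proof.
move=> ha hb x z _; rewrite /conv big_seq [RHS]big_seq; apply: eq_bigr => y.
by rewrite mem_itv => /andP[hxy hyz]; rewrite ha // hb.
Qed.

Lemma inI_conv a b : inI a -> inI b -> inI (conv a b).
Proof.
move=> /inIP ha /inIP hb; apply/inIP => x z hxz; rewrite /conv big_seq.
apply: (big_ind (fun p : {poly int} => size p <= `|rk P x z|.+1)%N).
- by rewrite size_poly0.
- by move=> p q hp hq; apply: leq_trans (size_polyD _ _) _; rewrite geq_max hp hq.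
move=> y; rewrite mem_itv => /andP[hxy hyz].
apply: leq_trans (size_polyMleq _ _) _; rewrite (abs_rk_add hxy hyz).
by move: (ha _ _ hxy) (hb _ _ hyz); lia.
Qed.

Lemma conv_diagl a b x y : le P x y ->
  conv a b x y = a x x * b x y + \sum_(z <- itv P x y | z != x) a x z * b z y.
Proof.
by move=> hxy; rewrite /conv (bigD1_seq x) ?itv_uniq // mem_itv Defs.le_refl.
Qed.

Lemma rightKLS_uniq kappa f1 f2 : (forall x, kappa x x = 1) ->
  rightKLS kappa f1 -> rightKLS kappa f2 -> eqI f1 f2.
Proof.
move=> k1 [[_ f1d f1h] f1e] [[_ f2d f2h] f2e].
apply: itv_ind => x y hxy IH; case: (eqVneq x y) => [<-|nxy]; first by rewrite f1d f2d.
have offdiag : \sum_(z <- itv P x y | z != x) kappa x z * f1 z y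
             = \sum_(z <- itv P x y | z != x) kappa x z * f2 z y.
  rewrite big_seq_cond [RHS]big_seq_cond; apply: eq_bigr => z.
  by rewrite mem_itv => /andP[/andP[hxz hzy] nzx]; rewrite IH // eq_sym.
have hr : 0 < rk P x y := rk_pos hxy nxy.
apply: (@eq_of_reflect_sub _ `|rk P x y|%N).
- by move: (f1h x y hxy nxy); set s := size (f1 x y); lia.
- by move: (f2h x y hxy nxy); set s := size (f2 x y); lia.
have E1 := f1e x y hxy; have E2 := f2e x y hxy.
rewrite !conv_diagl // k1 !mul1r offdiag in E1 E2.
rewrite -[LHS]/(bar f1 x y - f1 x y) -[RHS]/(bar f2 x y - f2 x y) E1 E2.
by rewrite addrAC subrr add0r addrAC subrr add0r.
Qed.

End IncidenceAlgebra.

Section Opposite.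

Variable P : wrposet.
Implicit Types (kappa a b f g : inc P).

Lemma conv_star a b x y : conv (star a) (star b) y x = conv b a x y.
Proof. by apply: eq_bigr => z _; rewrite mulrC. Qed.

Lemma bar_star a : bar (star a) = star (bar a).
Proof. by []. Qed.

Lemma delta_star x y : Defs.delta (Defs.opp P) y x = Defs.delta P x y.
Proof. by rewrite /Defs.delta eq_sym. Qed.

Lemma inI_star a : inI a -> inI (star a).
Proof. by move=> ha y x; apply: ha. Qed.

Lemma inIhalf_star a : inIhalf a -> inIhalf (star a).
Proof.
case=> ha a1 ah; split=> [||y x hxy nyx]; [exact: inI_star | exact: a1 |].
by apply: ah; rewrite // eq_sym.
Qed.

Lemma kernel_star kappa : kernel kappa -> kernel (star kappa).
Proof.
case=> kI k1 kr kl; split; [exact: inI_star | exact: k1 | |] => y x hxy;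
  rewrite bar_star conv_star delta_star; [exact: kl | exact: kr].
Qed.

Lemma rightKLS_star_of_left kappa g :
  leftKLS kappa g -> rightKLS (star kappa) (star g).
Proof.
by case=> gh ge; split=> [|y x hxy]; [exact: inIhalf_star | rewrite conv_star; apply: ge].
Qed.

Lemma leftKLS_star_of_right kappa f :
  rightKLS kappa f -> leftKLS (star kappa) (star f).
Proof.
by case=> fh fe; split=> [|y x hxy]; [exact: inIhalf_star | rewrite conv_star; apply: fe].
Qed.

Lemma Zof_star kappa f g :
  eqI (star (Zof kappa f g)) (Zof (star kappa) (star g) (star f)).
Proof.
move=> y x _.
have -> : Zof (star kappa) (star g) (star f) y x
        = conv (star (conv kappa f)) (star g) y x.
  by apply: eq_bigr => w _; rewrite conv_star.
by rewrite conv_star -conv_assoc.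
Qed.

End Opposite.

Lemma leftKLS_uniq (P : wrposet) (kappa g1 g2 : inc P) :
  (forall x, kappa x x = 1) -> leftKLS kappa g1 -> leftKLS kappa g2 -> eqI g1 g2.
Proof.
move=> k1 h1 h2 x y hxy.
exact: (rightKLS_uniq (P := Defs.opp P) k1 (rightKLS_star_of_left h1)
          (rightKLS_star_of_left h2) hxy).
Qed.

Lemma Zof_eqI (P : wrposet) (kappa f1 f2 g1 g2 : inc P) :
  eqI f1 f2 -> eqI g1 g2 -> eqI (Zof kappa f1 g1) (Zof kappa f2 g2).
Proof. by move=> hf hg; apply: conv_eqI => //; apply: conv_eqI. Qed.

Theorem proposition2p9 (P : wrposet) (kappa f g : inc P) :
  kernel kappa -> rightKLS kappa f -> leftKLS kappa g ->
  kernel (star kappa) /\ is_Zfunction (star kappa) (star (Zof kappa f g)).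
Proof.
move=> hk hf hg; have [kI k1 _ _] := hk.
have [[[fI _ _] _] [[gI _ _] _]] := (hf, hg).
have hg_star := rightKLS_star_of_left hg; have hf_star := leftKLS_star_of_right hf.
split; first exact: kernel_star.
split.
- exact: inI_star (inI_conv (inI_conv gI kI) fI).
- by exists (star g), (star f); split=> //; apply: Zof_star.
move=> f2 g2 hf2 hg2 y x hxy.
have ef : eqI f2 (star g) := rightKLS_uniq (P := Defs.opp P) k1 hf2 hg_star.
have eg : eqI g2 (star f) := leftKLS_uniq (P := Defs.opp P) k1 hg2 hf_star.
by rewrite (Zof_star kappa f g hxy) (Zof_eqI _ ef eg hxy).
Qed.
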